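(* Let $(\mathbb R/\pi\mathbb Z)^3_{\rm reg}=\{(\alpha,\beta,\gamma)\in(\mathbb R/\pi\mathbb Z)^3:\sin2\beta\neq0\}$ and $U=\{a\in\mathcal A_2:|a|=1\}\setminus(\mathcal A_1e_2\cup\mathcal A_1)$. The map $$\Psi:(\mathbb R/\pi\mathbb Z)^3_{\rm reg}\to U/\{\pm1\},\qquad(\alpha,\beta,\gamma)\mapsto\pm\exp(\alpha e_1)\exp(\beta e_1e_2)\exp(\gamma e_1)$$ is a two-fold covering map; explicitly $\Psi^{-1}(\Psi(\alpha,\beta,\gamma))=\{(\alpha,\beta,\gamma),(\alpha+\tfrac12\pi,-\beta,\gamma+\tfrac12\pi)\}$.
   Context: $\mathcal A_2$ is the real associative algebra generated by $e_1,e_2$ with $e_1^2=e_2^2=-1$, $e_1e_2=-e_2e_1$, with Euclidean norm in the basis $1,e_1,e_2,e_1e_2$; $\exp x=\sum_{m\ge0}x^m/m!$. $\mathcal A_1=\mathbb R+\mathbb Re_1$ and $\mathcal A_1e_2=\mathbb Re_2+\mathbb Re_1e_2$. *)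

From HB Require Import structures.
From mathcomp Require Import all_boot all_order all_algebra.
From mathcomp Require Import all_classical all_reals all_analysis.
From mathcomp Require Import generic_quotient.
Local Open Scope quotient_scope.
Set Implicit Arguments. Unset Strict Implicit. Unset Printing Implicit Defensive.
Import Order.TTheory GRing.Theory Num.Theory.
Import numFieldNormedType.Exports.
Local Open Scope classical_set_scope.
Local Open Scope ring_scope.

(* A_2 as R^4, coordinates w.r.t. the basis 1, e1, e2, e1e2. *)
Notation A2 R := 'rV[R]_4.

Section A2.
Variable R : realType.
Local Notation A2 := (A2 R).

Definition mkA (a b c d : R) : A2 := \row_(i < 4) [:: a; b; c; d]`_i.
Definition co (a : A2) (k : nat) : R := a ord0 (inord k).

Definition aone : A2 := mkA 1 0 0 0.
Definition e1 : A2 := mkA 0 1 0 0.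
Definition e2 : A2 := mkA 0 0 1 0.
Definition e12 : A2 := mkA 0 0 0 1.

(* Product of A_2, determined by e1^2 = e2^2 = -1, e1e2 = -e2e1 (bilinear
   extension of the multiplication table of the basis 1,e1,e2,e1e2). *)
Definition amul (a b : A2) : A2 :=
  let a0 := co a 0 in let a1 := co a 1 in let a2 := co a 2 in let a3 := co a 3 in
  let b0 := co b 0 in let b1 := co b 1 in let b2 := co b 2 in let b3 := co b 3 in
  mkA (a0 * b0 - a1 * b1 - a2 * b2 - a3 * b3)
      (a0 * b1 + a1 * b0 + a2 * b3 - a3 * b2)
      (a0 * b2 - a1 * b3 + a2 * b0 + a3 * b1)
      (a0 * b3 + a1 * b2 - a2 * b1 + a3 * b0).

Definition apow (x : A2) (m : nat) : A2 := iter m (amul x) aone.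

Definition aexp (x : A2) : A2 :=
  limn (series (fun m : nat => (m`!%:R)^-1 *: apow x m)).

Definition anorm (a : A2) : R := Num.sqrt (\sum_(i < 4) a ord0 i ^+ 2).

Definition in_A1 (a : A2) : Prop := co a 2 = 0 /\ co a 3 = 0.
Definition in_A1e2 (a : A2) : Prop := co a 0 = 0 /\ co a 1 = 0.

Definition Uset : set A2 := [set a | anorm a = 1 /\ ~ in_A1e2 a /\ ~ in_A1 a].

Definition modpi (x y : R) : bool := `[< exists k : int, x - y = k%:~R * (trigo.pi : R) >].

Lemma modpi_refl : reflexive modpi.
Proof. move=> x; apply/asboolP; exists 0; by rewrite subrr mul0r. Qed.
Lemma modpi_sym : symmetric modpi.
Proof.
move=> x y; apply/asboolP/asboolP => -[k hk]; exists (- k);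
  by rewrite mulrNz mulNr -hk opprB.
Qed.
Lemma modpi_trans : transitive modpi.
Proof.
move=> y x z /asboolP[k hk] /asboolP[l hl]; apply/asboolP; exists (k + l).
by rewrite mulrzDr mulrDl -hk -hl addrA subrK.
Qed.
Definition modpi_equiv := EquivRel modpi modpi_refl modpi_sym modpi_trans.

Definition Rmodpi := {eq_quot modpi_equiv}.
HB.instance Definition _ := Topological.copy Rmodpi (quotient_topology Rmodpi).
HB.instance Definition _ := Quotient.on Rmodpi.

Definition pmrel (a b : A2) : bool := (a == b) || (a == - b).
Lemma pmrel_refl : reflexive pmrel.
Proof. by move=> a; rewrite /pmrel eqxx. Qed.
Lemma pmrel_sym : symmetric pmrel.
Proof.
move=> a b; rewrite /pmrel [b == a]eq_sym; congr (_ || _).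
by apply/eqP/eqP => ->; rewrite opprK.
Qed.
Lemma pmrel_trans : transitive pmrel.
Proof.
move=> b a c; rewrite /pmrel => /orP[] /eqP -> /orP[] /eqP ->.
- by rewrite eqxx.
- by rewrite eqxx orbT.
- by rewrite eqxx orbT.
- by rewrite opprK eqxx.
Qed.
Definition pm_equiv := EquivRel pmrel pmrel_refl pmrel_sym pmrel_trans.

Definition A2pm := {eq_quot pm_equiv}.
HB.instance Definition _ := Topological.copy A2pm (quotient_topology A2pm).
HB.instance Definition _ := Quotient.on A2pm.

Local Notation Torus3 := (Rmodpi * Rmodpi * Rmodpi)%type.

Definition reg3 : set Torus3 := [set x | sin (2 * repr x.1.2) != 0].

Definition Uquot : set A2pm := [set \pi_A2pm a | a in Uset].

Definition psi0 (al be ga : R) : A2 :=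
  amul (amul (aexp (al *: e1)) (aexp (be *: e12))) (aexp (ga *: e1)).

Definition Psi (x : Torus3) : A2pm :=
  \pi_A2pm (psi0 (repr x.1.1) (repr x.1.2) (repr x.2)).

Definition shift3 (x : Torus3) : Torus3 :=
  (\pi_Rmodpi (repr x.1.1 + (trigo.pi : R) / 2), \pi_Rmodpi (- repr x.1.2),
   \pi_Rmodpi (repr x.2 + (trigo.pi : R) / 2)).

End A2.

Notation Torus3 R := (Rmodpi R * Rmodpi R * Rmodpi R)%type.

Definition two_fold_covering {X Y : topologicalType} (p : X -> Y)
    (A : set X) (B : set Y) : Prop :=
  [/\ p @` A = B,
      {within A, continuous p} &
      forall y, B y -> exists V : set Y, [/\ open V, V y &
        exists O1 O2 : set X, [/\ open O1, open O2,
          A `&` p @^-1` V = (O1 `&` A) `|` (O2 `&` A),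
          O1 `&` O2 `&` A = set0 &
          forall W, W = O1 `&` A \/ W = O2 `&` A ->
            [/\ p @` W = V `&` B, {within W, continuous p} &
             exists g : Y -> X,
               [/\ forall z, (V `&` B) z -> W (g z) /\ p (g z) = z,
                   forall x, W x -> g (p x) = x &
                   {within V `&` B, continuous g}]]]]].

From HB Require Import structures.
From mathcomp Require Import all_boot all_order all_algebra.
From mathcomp Require Import all_classical all_reals all_analysis.
From mathcomp Require Import generic_quotient ring lra.
Set Implicit Arguments. Unset Strict Implicit. Unset Printing Implicit Defensive.
Import Order.TTheory GRing.Theory Num.Theory.
Import numFieldNormedType.Exports.
Local Open Scope classical_set_scope.
Local Open Scope ring_scope.
Local Open Scope quotient_scope.

(* In coordinates, exp(al e1) exp(be e1e2) exp(ga e1) is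
     (cos be cos(al+ga), cos be sin(al+ga), sin be sin(ga-al), sin be cos(ga-al)).
   When sin 2be != 0 both coordinate pairs are nonzero, so the point up to sign
   determines be up to sign modulo pi and al+ga, ga-al modulo pi with linked
   parities; solving gives exactly the two preimages (al,be,ga) and
   (al+pi/2,-be,ga+pi/2) modulo pi.  Local inverses come from polar angles of the
   two coordinate pairs measured from reference directions u and v, where atan is
   continuous; the two sheets over such a neighbourhood are separated by the sign
   of cos(al+ga-u) cos(ga-al-v). *)

Section Coordinates.
Variable R : realType.
Local Notation A2 := (A2 R).
Local Notation mkA := (@mkA R).
Local Notation co := (@co R).

Lemma co_mkA a b c d :
  [/\ co (mkA a b c d) 0 = a, co (mkA a b c d) 1 = b,
      co (mkA a b c d) 2 = c & co (mkA a b c d) 3 = d].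
Proof. by rewrite /co /mkA !mxE !inordK. Qed.

Lemma mkA_co (a : A2) : mkA (co a 0) (co a 1) (co a 2) (co a 3) = a.
Proof.
apply/rowP => i; rewrite /mkA mxE /co.
by case: i => [[|[|[|[|k]]]] Hi] //=; congr (a _ _); apply: val_inj; rewrite /= inordK.
Qed.

Lemma mkA_inj a b c d a' b' c' d' : mkA a b c d = mkA a' b' c' d' ->
  [/\ a = a', b = b', c = c' & d = d'].
Proof.
move=> E; have [? ? ? ?] := co_mkA a b c d; have [? ? ? ?] := co_mkA a' b' c' d'.
by split; congruence.
Qed.

Lemma mkAE a b c d :
  mkA a b c d = a *: aone R + b *: e1 R + c *: e2 R + d *: e12 R.
Proof.
apply/rowP => i; rewrite !mxE.
by case: i => [[|[|[|[|k]]]] Hi] //=; rewrite ?mulr1 ?mulr0 ?addr0 ?add0r.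
Qed.

Lemma mkAN a b c d : - mkA a b c d = mkA (- a) (- b) (- c) (- d).
Proof. by apply/rowP => i; rewrite !mxE; case: i => [[|[|[|[|k]]]] Hi]. Qed.

Lemma mkAD a b c d a' b' c' d' :
  mkA a b c d + mkA a' b' c' d' = mkA (a + a') (b + b') (c + c') (d + d').
Proof. by apply/rowP => i; rewrite !mxE; case: i => [[|[|[|[|k]]]] Hi]. Qed.

Lemma mkAZ k a b c d : k *: mkA a b c d = mkA (k * a) (k * b) (k * c) (k * d).
Proof. by apply/rowP => i; rewrite !mxE; case: i => [[|[|[|[|j]]]] Hi]. Qed.

Lemma coN (a : A2) i : co (- a) i = - co a i.
Proof. by rewrite /co mxE. Qed.

Lemma amul_mkA a0 a1 a2 a3 b0 b1 b2 b3 :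
  amul (mkA a0 a1 a2 a3) (mkA b0 b1 b2 b3) =
  mkA (a0 * b0 - a1 * b1 - a2 * b2 - a3 * b3)
      (a0 * b1 + a1 * b0 + a2 * b3 - a3 * b2)
      (a0 * b2 - a1 * b3 + a2 * b0 + a3 * b1)
      (a0 * b3 + a1 * b2 - a2 * b1 + a3 * b0).
Proof.
rewrite /amul; have [-> -> -> ->] := co_mkA a0 a1 a2 a3.
by have [-> -> -> ->] := co_mkA b0 b1 b2 b3.
Qed.

Lemma anorm_mkA a b c d :
  anorm (mkA a b c d) = Num.sqrt (a ^+ 2 + b ^+ 2 + c ^+ 2 + d ^+ 2).
Proof. by rewrite /anorm !big_ord_recr big_ord0 /= !mxE /= add0r. Qed.

Lemma anorm_eq1 (a : A2) : anorm a = 1 ->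
  co a 0 ^+ 2 + co a 1 ^+ 2 + co a 2 ^+ 2 + co a 3 ^+ 2 = 1.
Proof.
rewrite -{1}(mkA_co a) anorm_mkA => E.
by rewrite -[LHS]sqr_sqrtr ?E ?expr1n // !addr_ge0 // sqr_ge0.
Qed.

End Coordinates.

Section Exponential.
Variable R : realType.
Local Notation A2 := (A2 R).

(* [aone] and [j] span a copy of the complex numbers on which [x] acts as [t i]. *)
Section ComplexLine.
Variables (x j : A2) (t : R).
Hypothesis x_mul : forall p q : R,
  amul x (p *: aone R + q *: j) = (- (t * q)) *: aone R + (t * p) *: j.

Lemma apow_complex_line m : apow x m =
  ((~~ odd m)%:R * (-1) ^+ m./2 * t ^+ m) *: aone R +
  ((odd m)%:R * (-1) ^+ m.-1./2 * t ^+ m) *: j.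
Proof.
elim: m => [|m IH]; first by rewrite /= !mul0r scale0r addr0 !expr0 !mulr1 scale1r.
rewrite /apow iterS -/(apow x m) IH x_mul; congr (_ *: _ + _ *: _).
- case: m {IH} => [|m]; first by rewrite !mul0r mulr0 oppr0.
  by rewrite /= negbK; case: (odd m); rewrite /= ?exprS; ring.
- by rewrite /=; case: (odd m); rewrite /= ?exprS; ring.
Qed.

Lemma aexp_complex_line : aexp x = cos t *: aone R + sin t *: j.
Proof.
rewrite /aexp.
have -> : series (fun m : nat => (m`!%:R)^-1 *: apow x m) =
    (fun n => series (cos_coeff t) n *: aone R + series (sin_coeff t) n *: j).
  apply/funext => n; rewrite /series /= !scaler_suml -big_split /=.
  apply: eq_bigr => m _; rewrite apow_complex_line scalerDr !scalerA.
  by congr (_ *: _ + _ *: _); rewrite /cos_coeff /sin_coeff /= -?exprnP; ring.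
apply: cvg_lim => //; apply: cvgD; apply: cvgZr_tmp.
- by rewrite cos.unlock; exact: is_cvg_series_cos_coeff.
- by rewrite sin.unlock; exact: is_cvg_series_sin_coeff.
Qed.

End ComplexLine.

Lemma aexp_e1 (t : R) : aexp (t *: e1 R) = mkA (cos t) (sin t) 0 0.
Proof.
rewrite (@aexp_complex_line _ (e1 R) t) => [|p q]; first by rewrite mkAE !scale0r !addr0.
by rewrite /aone /e1 !mkAZ !mkAD amul_mkA; congr mkA; ring.
Qed.

Lemma aexp_e12 (t : R) : aexp (t *: e12 R) = mkA (cos t) 0 0 (sin t).
Proof.
rewrite (@aexp_complex_line _ (e12 R) t) => [|p q]; first by rewrite mkAE !scale0r !addr0.
by rewrite /aone /e12 !mkAZ !mkAD amul_mkA; congr mkA; ring.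
Qed.

Definition psi_trig (be s d : R) : A2 :=
  mkA (cos be * cos s) (cos be * sin s) (sin be * sin d) (sin be * cos d).

Lemma psi0E al be ga : psi0 al be ga = psi_trig be (al + ga) (ga - al).
Proof.
rewrite /psi0 aexp_e1 aexp_e12 aexp_e1 !amul_mkA /psi_trig.
by rewrite cosD sinD sinB cosB; congr mkA; ring.
Qed.

End Exponential.

Lemma periodicz {U : zmodType} {T : Type} (f : U -> T) (p : U) :
  (forall x, f (x + p) = f x) -> forall (k : int) x, f (x + p *~ k) = f x.
Proof.
move=> fp k x; have fN y : f (y - p) = f y by rewrite -[in RHS](subrK p y) fp.
case: k => n; rewrite ?NegzE ?mulrNz -?pmulrn.
- by elim: n => [|n IH]; rewrite ?mulr0n ?addr0 // mulrSr addrA fp.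
- by elim: n => [|n IH]; rewrite ?mulr1n ?fN // mulrSr opprD addrA fN.
Qed.

Section Trigonometry.
Variable R : realType.
Local Notation pi := (trigo.pi : R).

Lemma cosBpi (x : R) : cos (x - pi) = - cos x.
Proof. by rewrite -[in RHS](subrK pi x) cosDpi opprK. Qed.

Lemma sinBpi (x : R) : sin (x - pi) = - sin x.
Proof. by rewrite -[in RHS](subrK pi x) sinDpi opprK. Qed.

Lemma cos_eq1 (t : R) : cos t = 1 -> exists k : int, t = (k * 2)%:~R * pi.
Proof.
move=> ct1; pose n := Num.floor (t / (pi *+ 2)); exists n.
have pi2_gt0 : 0 < pi *+ 2 by rewrite pmulrn_lgt0 // pi_gt0.
pose t0 := t - (n * 2)%:~R * pi.
have t0E : t0 = t + (pi *+ 2) *~ (- n).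
  by rewrite /t0 mulrNz -mulrzl intrM -mulr_natl; ring.
have ct0 : cos t0 = 1 by rewrite t0E periodicz //; exact: cosD2pi.
have [t0_ge0 t0_lt] : 0 <= t0 /\ t0 < pi *+ 2.
  have /andP[lo hi] := floor_itv (t / (pi *+ 2)).
  rewrite ler_pdivlMr // in lo; rewrite ltr_pdivrMr // intrD in hi.
  by rewrite /t0 intrM -mulrA mulr_natl; split; [rewrite subr_ge0|]; lra.
suff : t0 = 0 by rewrite /t0 => /eqP; rewrite subr_eq0 => /eqP.
have cos0_inj y : 0 <= y <= pi -> cos y = 1 -> y = 0.
  move=> y_itv cy; apply: cos_inj; rewrite ?in_itv //= ?lexx ?pi_ge0 //.
  by rewrite cy cos0.
have [t0_le|t0_gt] := lerP t0 pi; first by apply: cos0_inj; rewrite ?t0_ge0.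
suff : pi *+ 2 - t0 = 0 by lra.
apply: cos0_inj; first by apply/andP; split; rewrite mulr2n; lra.
by rewrite -cosN opprB -ct0 -{2}(subrK (pi *+ 2) t0) cosD2pi.
Qed.

Lemma sin2_neq0 (x : R) : sin (2 * x) != 0 -> cos x != 0 /\ sin x != 0.
Proof.
by rewrite mulr_natl sin_mulr2n -mulr_natl !mulf_eq0 !negb_or => /and3P[_ ? ?].
Qed.

Lemma cos_sin_sign (x y : R) (b : bool) :
  cos y = (-1) ^+ b * cos x -> sin y = (-1) ^+ b * sin x ->
  exists k : int, y - x = (k * 2 + b)%:~R * pi.
Proof.
move=> cy sy.
have [k xk] : exists k : int, y - (x + b%:R * pi) = (k * 2)%:~R * pi.
  apply: cos_eq1; rewrite cosB cy sy mulr_natl.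
  case: b {cy sy}; last by rewrite mulr0n addr0 expr0 !mul1r -!expr2 cos2Dsin2.
  by rewrite mulr1n cosDpi sinDpi expr1 !mulN1r !mulrNN -!expr2 cos2Dsin2.
by exists k; rewrite intrD mulrDl -xk; ring.
Qed.

Lemma sqr_eq_sign (x y : R) : x ^+ 2 = y ^+ 2 -> exists b : bool, x = (-1) ^+ b * y.
Proof.
move/eqP; rewrite eqf_sqr => /orP[]/eqP ->.
- by exists false; rewrite mul1r.
- by exists true; rewrite mulN1r.
Qed.

Lemma polar_sign_eq (c c' x x' : R) (b : bool) : c != 0 ->
  c' * cos x' = (-1) ^+ b * (c * cos x) -> c' * sin x' = (-1) ^+ b * (c * sin x) ->
  exists h : bool, c' = (-1) ^+ h * c /\
    exists k : int, x' - x = (k * 2 + (b (+) h))%:~R * pi.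
Proof.
move=> c0 Ec Es.
have [h c'E] : exists h : bool, c' = (-1) ^+ h * c.
  apply: sqr_eq_sign; rewrite -[LHS]mulr1 -(cos2Dsin2 x') -[RHS]mulr1 -(cos2Dsin2 x).
  have : (c' * cos x') ^+ 2 + (c' * sin x') ^+ 2 = (c * cos x) ^+ 2 + (c * sin x) ^+ 2.
    by rewrite Ec Es !exprMn sqrr_sign !mul1r.
  by rewrite !exprMn -!mulrDr.
have hh : (-1) ^+ h * (-1) ^+ h = 1 :> R by rewrite -expr2 sqrr_sign.
have s0 : (-1) ^+ h * c != 0 by rewrite mulf_neq0 ?signr_eq0.
exists h; split => //; apply: cos_sin_sign; apply: (mulfI s0); rewrite -c'E.
- rewrite Ec signr_addb c'E.
  by transitivity ((-1) ^+ b * ((-1) ^+ h * (-1) ^+ h * (c * cos x))); [rewrite hh mul1r|ring].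
- rewrite Es signr_addb c'E.
  by transitivity ((-1) ^+ b * ((-1) ^+ h * (-1) ^+ h * (c * sin x))); [rewrite hh mul1r|ring].
Qed.

End Trigonometry.

Section RealFiber.
Variable R : realType.
Local Notation pi := (trigo.pi : R).

Lemma modpiP (x y : R) : reflect (exists k : int, x - y = k%:~R * pi) (modpi x y).
Proof. exact: asboolP. Qed.

Lemma modpi_halves (al ga al' ga' : R) (m n : int) (b c : bool) :
  (al' + ga') - (al + ga) = (m * 2 + b)%:~R * pi ->
  (ga' - al') - (ga - al) = (n * 2 + c)%:~R * pi ->
  if b == c then modpi al' al /\ modpi ga' ga
  else modpi al' (al + pi / 2) /\ modpi ga' (ga + pi / 2).
Proof.
have E (k : int) (x y : R) : x - y = k%:~R * pi -> modpi x y.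
  by move=> xy; apply/modpiP; exists k.
rewrite !intrD !intrM -!pmulrn; move: (trigo.pi : R) E => p E.
case: b c => [] [] /= hs hd; split;
  [apply: (E (m - n))|apply: (E (m + n + 1))|apply: (E (m - n))|apply: (E (m + n))
  |apply: (E (m - n - 1))|apply: (E (m + n))|apply: (E (m - n))|apply: (E (m + n))];
  rewrite ?intrD ?intrB ?intrN ?mulr1z ?mulrDl ?mulrBl ?mulNr; lra.
Qed.

Lemma psi0_fiber (al be ga al' be' ga' : R) (b : bool) :
  sin (2 * be) != 0 -> sin (2 * be') != 0 ->
  psi0 al' be' ga' = (-1) ^+ b *: psi0 al be ga ->
  [/\ modpi al' al, modpi be' be & modpi ga' ga] \/
  [/\ modpi al' (al + pi / 2), modpi be' (- be) & modpi ga' (ga + pi / 2)].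
Proof.
move=> /sin2_neq0[cb0 sb0] _; rewrite !psi0E /psi_trig mkAZ => /mkA_inj[E0 E1 E2 E3].
have [h [cE [m sE]]] := polar_sign_eq cb0 E0 E1.
have [z [sbE [n dE]]] := polar_sign_eq sb0 E3 E2.
have := modpi_halves sE dE.
have addb_eq (x y w : bool) : (x (+) y == x (+) w) = (y == w) by case: x y w => [] [] [].
rewrite addb_eq.
have [hz [al_eq ga_eq]|/negbTE zh] := eqVneq h z.
  rewrite -hz in sbE; left; split => //; apply/modpiP.
  by have [k ->] := cos_sin_sign cE sbE; exists (k * 2 + h).
move=> [al_eq ga_eq]; right; split => //; apply/modpiP.
have zE : z = ~~ h by move: zh; case: (h); case: (z).
rewrite zE in sbE.
have [k ->] : exists k : int, be' - - be = (k * 2 + h)%:~R * pi.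
  by apply: cos_sin_sign; rewrite ?cosN ?sinN ?cE // sbE signrN mulNr mulrN.
by exists (k * 2 + h).
Qed.

End RealFiber.

Section Atan.
Variable R : realType.

Lemma cos_atan_gt0 (x : R) : 0 < cos (atan x).
Proof. by apply: cos_gt0_pihalf; rewrite atan_gtNpi2 atan_ltpi2. Qed.

Lemma sin_atan (x : R) : sin (atan x) = x * cos (atan x).
Proof.
by rewrite -[X in X * _](atanK x) /tan divfK // gt_eqF // cos_atan_gt0.
Qed.

Lemma cos_atan_sqr (x : R) : cos (atan x) ^+ 2 * (1 + x ^+ 2) = 1.
Proof.
have c0 : cos (atan x) != 0 by rewrite gt_eqF // cos_atan_gt0.
by rewrite -{2}(atanK x) -cos2_tan2 // mulfV // expf_neq0.
Qed.

Lemma atan_circle (r1 r2 : R) : r1 ^+ 2 + r2 ^+ 2 = 1 -> r1 != 0 ->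
  exists b : bool, cos (atan (r2 / r1)) = (-1) ^+ b * r1 /\
                   sin (atan (r2 / r1)) = (-1) ^+ b * r2.
Proof.
move=> r_sqr r1_0; have [b cE] : exists b : bool, cos (atan (r2 / r1)) = (-1) ^+ b * r1.
  apply: sqr_eq_sign; rewrite -[LHS]mulr1 -r_sqr -[RHS]mul1r.
  by rewrite -(cos_atan_sqr (r2 / r1)); field.
by exists b; split => //; rewrite sin_atan cE; field.
Qed.

End Atan.

Section Polar.
Variables (R : realType) (u : R).
Implicit Types x y : R.

(* Coordinates in the frame rotated by [u]; the polar angle is taken within
   [pi/2] of [u], which makes it continuous where [rot_re x y != 0]. *)
Definition rot_re x y := cos u * x + sin u * y.
Definition rot_im x y := - sin u * x + cos u * y.
Definition polar_dev x y := atan (rot_im x y / rot_re x y).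
Definition polar_angle x y := u + polar_dev x y.
Definition polar_radius x y := rot_re x y / cos (polar_dev x y).

Lemma cos_polar_dev_neq0 x y : cos (polar_dev x y) != 0.
Proof. by rewrite gt_eqF // cos_atan_gt0. Qed.

Lemma polar_radius_neq0 x y : rot_re x y != 0 -> polar_radius x y != 0.
Proof. by move=> re0; rewrite mulf_neq0 // invr_eq0 cos_polar_dev_neq0. Qed.

Lemma polar_coord x y : rot_re x y != 0 ->
  polar_radius x y * cos (polar_angle x y) = x /\
  polar_radius x y * sin (polar_angle x y) = y.
Proof.
move=> re0; have c0 := cos_polar_dev_neq0 x y; have cu := cos2Dsin2 u.
rewrite /polar_radius /polar_angle cosD sinD {2 4}/polar_dev sin_atan -/(polar_dev x y).
rewrite /rot_re /rot_im in re0 *; split; [rewrite -[RHS]mulr1 -cu|rewrite -[RHS]mulr1 -cu];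
  by field; rewrite re0 c0.
Qed.

Lemma polar_rot_neg x y : polar_dev (- x) (- y) = polar_dev x y /\
  polar_radius (- x) (- y) = - polar_radius x y.
Proof.
have reN : rot_re (- x) (- y) = - rot_re x y by rewrite /rot_re; ring.
have imN : rot_im (- x) (- y) = - rot_im x y by rewrite /rot_im; ring.
have devN : polar_dev (- x) (- y) = polar_dev x y by rewrite /polar_dev reN imN divrNN.
by rewrite /polar_radius devN reN mulNr.
Qed.

End Polar.

Section Chart.
Variables (R : realType) (u v : R).
Local Notation A2 := (A2 R).
Local Notation co := (@co R).

Definition psi3 (p : R * R * R) : A2 := psi0 p.1.1 p.1.2 p.2.

Definition chart_dom : set A2 :=
  [set a | rot_re u (co a 0) (co a 1) != 0 /\ rot_re v (co a 3) (co a 2) != 0].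

Definition chart (a : A2) : R * R * R :=
  let s := polar_angle u (co a 0) (co a 1) in
  let d := polar_angle v (co a 3) (co a 2) in
  ((s - d) / 2,
   atan (polar_radius v (co a 3) (co a 2) / polar_radius u (co a 0) (co a 1)),
   (s + d) / 2).

(* The sign of [sheet] tells apart the two preimages [p] and [torus_shift p] of a point;
   [chart] always lands where it is positive. *)
Definition sheet (p : R * R * R) : R :=
  cos (p.1.1 + p.2 - u) * cos (p.2 - p.1.1 - v).

Lemma chart_domN (a : A2) : chart_dom a -> chart_dom (- a).
Proof.
by rewrite /chart_dom /= !coN /rot_re !mulrN -!opprD !oppr_eq0.
Qed.

Lemma chartN (a : A2) : chart (- a) = chart a.
Proof.
rewrite /chart !coN /polar_angle.
have [d1 r1] := polar_rot_neg u (co a 0) (co a 1).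
have [d2 r2] := polar_rot_neg v (co a 3) (co a 2).
by rewrite d1 d2 r1 r2 divrNN.
Qed.

Lemma sheet_chart (a : A2) : 0 < sheet (chart a).
Proof.
rewrite /sheet /chart /polar_angle /=.
have -> : forall s d : R, (s - d) / 2 + (s + d) / 2 = s by move=> *; field.
have -> : forall s d : R, (s + d) / 2 - (s - d) / 2 = d by move=> *; field.
by rewrite [u + _]addrC [v + _]addrC !addrK mulr_gt0 ?cos_atan_gt0.
Qed.

Lemma psi3_chart (a : A2) : anorm a = 1 -> chart_dom a ->
  sin (2 * (chart a).1.2) != 0 /\ exists b : bool, psi3 (chart a) = (-1) ^+ b *: a.
Proof.
move=> /anorm_eq1 a1 [re1 re2].
have [a0E a1E] := polar_coord re1; have [a3E a2E] := polar_coord re2.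
set r1 := polar_radius u _ _ in a0E a1E; set r2 := polar_radius v _ _ in a3E a2E.
set s := polar_angle u _ _ in a0E a1E; set d := polar_angle v _ _ in a3E a2E.
have r1_0 : r1 != 0 by exact: polar_radius_neq0.
have r2_0 : r2 != 0 by exact: polar_radius_neq0.
have r_sqr : r1 ^+ 2 + r2 ^+ 2 = 1.
  rewrite -{}a1 -a0E -a1E -a2E -a3E.
  by rewrite -[r1 ^+ 2]mulr1 -(cos2Dsin2 s) -[r2 ^+ 2]mulr1 -(cos2Dsin2 d); ring.
have [b [cE sE]] := atan_circle r_sqr r1_0.
split.
  change (sin (2 * atan (r2 / r1)) != 0).
  rewrite mulr_natl sin_mulr2n -mulr_natl cE sE.
  by rewrite mulf_neq0 // mulf_neq0 // mulf_neq0 ?signr_eq0.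
exists b; change (psi0 ((s - d) / 2) (atan (r2 / r1)) ((s + d) / 2) = (-1) ^+ b *: a).
rewrite psi0E /psi_trig cE sE.
rewrite -[in RHS](mkA_co a) -a0E -a1E -a2E -a3E mkAZ.
have -> : (s - d) / 2 + (s + d) / 2 = s by field.
have -> : (s + d) / 2 - (s - d) / 2 = d by field.
by congr mkA; ring.
Qed.

Lemma chart_dom_psi3 (p : R * R * R) : sin (2 * p.1.2) != 0 ->
  chart_dom (psi3 p) <-> sheet p != 0.
Proof.
move=> /sin2_neq0[c0 s0]; rewrite /chart_dom /psi3 /sheet psi0E /psi_trig /=.
have [-> -> -> ->] := co_mkA (cos p.1.2 * cos (p.1.1 + p.2)) (cos p.1.2 * sin (p.1.1 + p.2))
  (sin p.1.2 * sin (p.2 - p.1.1)) (sin p.1.2 * cos (p.2 - p.1.1)).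
rewrite /rot_re !cosB mulf_eq0 negb_or.
have factor w c x y : cos w * (c * x) + sin w * (c * y) = c * (x * cos w + y * sin w).
  by ring.
rewrite !factor.
rewrite !mulf_eq0 (negbTE c0) (negbTE s0) /=.
by split=> [[-> ->]|/andP[]].
Qed.

End Chart.

Section Torus.
Variable R : realType.
Local Notation pi := (trigo.pi : R).
Local Notation A2 := (A2 R).
Local Notation T3 := (Torus3 R).
Local Notation RQ := (Rmodpi R).
Local Notation AQ := (A2pm R).

Lemma piR_eq (x y : R) : \pi_RQ x = \pi_RQ y <-> modpi x y.
Proof. by split => [/eqmodP|?]; last apply/eqmodP. Qed.

Lemma modpi_reprK (x : R) : modpi (repr (\pi_RQ x)) x.
Proof. by apply/piR_eq; rewrite reprK. Qed.

Lemma modpi_congr {T : Type} (f : R -> T) :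
  (forall x, f (x + pi) = f x) -> forall x y, modpi x y -> f x = f y.
Proof.
move=> fpi x y /modpiP[k xy].
by rewrite -(subrK y x) addrC xy mulrzl periodicz.
Qed.

Lemma modpi_congr3 {T : Type} (f : R -> R -> R -> T) :
  (forall a b c, f (a + pi) b c = f a b c) ->
  (forall a b c, f a (b + pi) c = f a b c) ->
  (forall a b c, f a b (c + pi) = f a b c) ->
  forall a b c a' b' c', modpi a a' -> modpi b b' -> modpi c c' ->
  f a b c = f a' b' c'.
Proof.
move=> fa fb fc a b c a' b' c' aa' bb' cc'.
rewrite (modpi_congr (fun x => fa x b c) aa') (modpi_congr (fun x => fb a' x c) bb').
exact: modpi_congr (fc a' b') _ _ cc'.
Qed.

Lemma piA_eq (a b : A2) : \pi_AQ a = \pi_AQ b <-> a = b \/ a = - b.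
Proof.
split => [/eqmodP/orP[]/eqP|]; [by left|by right|].
by move=> ab; apply/eqmodP/orP; case: ab => ->; [left|right].
Qed.

Lemma piA_signr (b : bool) (a : A2) : \pi_AQ ((-1) ^+ b *: a) = \pi_AQ a.
Proof. by apply/piA_eq; case: b; rewrite ?scale1r ?scaleN1r; [right|left]. Qed.

Lemma piA_opp (a : A2) : \pi_AQ (- a) = \pi_AQ a.
Proof. by rewrite -scaleN1r (piA_signr true). Qed.

Lemma repr_piA (a : A2) : repr (\pi_AQ a) = a \/ repr (\pi_AQ a) = - a.
Proof. by apply/piA_eq; rewrite reprK. Qed.

Definition torus_pi (p : R * R * R) : T3 := (\pi_RQ p.1.1, \pi_RQ p.1.2, \pi_RQ p.2).

Definition torus_repr (x : T3) : R * R * R := (repr x.1.1, repr x.1.2, repr x.2).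

Lemma torus_reprK (x : T3) : torus_pi (torus_repr x) = x.
Proof. by case: x => [[a b] c]; rewrite /torus_pi /= !reprK. Qed.

Lemma torus_pi_eq (p q : R * R * R) :
  modpi p.1.1 q.1.1 -> modpi p.1.2 q.1.2 -> modpi p.2 q.2 -> torus_pi p = torus_pi q.
Proof. by move=> /piR_eq E1 /piR_eq E2 /piR_eq E3; rewrite /torus_pi E1 E2 E3. Qed.

Lemma torus_pi_congr {T : Type} (f : R -> R -> R -> T) :
  (forall a b c, f (a + pi) b c = f a b c) ->
  (forall a b c, f a (b + pi) c = f a b c) ->
  (forall a b c, f a b (c + pi) = f a b c) ->
  forall p, f (torus_repr (torus_pi p)).1.1 (torus_repr (torus_pi p)).1.2
              (torus_repr (torus_pi p)).2 = f p.1.1 p.1.2 p.2.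
Proof. by move=> fa fb fc p; apply: modpi_congr3 => //; exact: modpi_reprK. Qed.

Lemma psi0_Dpi (al be ga : R) :
  [/\ psi0 (al + pi) be ga = - psi0 al be ga, psi0 al (be + pi) ga = - psi0 al be ga
    & psi0 al be (ga + pi) = - psi0 al be ga].
Proof.
rewrite !psi0E /psi_trig !mkAN.
have -> : ga - (al + pi) = (ga - al) - pi by ring.
have -> : al + pi + ga = (al + ga) + pi by ring.
have -> : al + (ga + pi) = (al + ga) + pi by ring.
have -> : ga + pi - al = (ga - al) + pi by ring.
by rewrite !cosDpi !sinDpi cosBpi sinBpi; split; congr mkA; ring.
Qed.

Lemma Psi_torus_pi (p : R * R * R) : Psi (torus_pi p) = \pi_AQ (psi3 p).
Proof.
rewrite /Psi /psi3.
apply: (@torus_pi_congr _ (fun a b c => \pi_AQ (psi0 a b c)) _ _ _ p) => a b c;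
  by have [E1 E2 E3] := psi0_Dpi a b c; rewrite ?E1 ?E2 ?E3 piA_opp.
Qed.

Lemma reg3_torus_pi (p : R * R * R) : reg3 (torus_pi p) <-> sin (2 * p.1.2) != 0.
Proof.
rewrite /reg3 /= (@torus_pi_congr _ (fun _ b _ => sin (2 * b)) _ _ _ p) //.
by move=> _ b _; rewrite mulrDr (mulr_natl pi 2) sinD2pi.
Qed.

Definition torus_shift (p : R * R * R) : R * R * R :=
  (p.1.1 + pi / 2, - p.1.2, p.2 + pi / 2).

Lemma shift3_torus_pi (p : R * R * R) : shift3 (torus_pi p) = torus_pi (torus_shift p).
Proof.
apply: (@torus_pi_congr _ (fun a b c => torus_pi (a + pi / 2, - b, c + pi / 2)) _ _ _ p)
  => a b c;
  apply: torus_pi_eq => /=; apply/modpiP;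
  [exists 1|exists 0|exists 0|exists 0|exists (-1)|exists 0|exists 0|exists 0|exists 1];
  rewrite ?mulr1z ?mulrN1z ?mulr0z; ring.
Qed.

Lemma sheet_torus_pi (u v : R) (p : R * R * R) :
  sheet u v (torus_repr (torus_pi p)) = sheet u v p.
Proof.
apply: (@torus_pi_congr _ (fun a b c => sheet u v (a, b, c)) _ _ _ p) => a b c //;
  rewrite /sheet /=.
- have -> : a + pi + c - u = (a + c - u) + pi by ring.
  have -> : c - (a + pi) - v = (c - a - v) - pi by ring.
  by rewrite cosDpi cosBpi mulrNN.
- have -> : a + (c + pi) - u = (a + c - u) + pi by ring.
  have -> : c + pi - a - v = (c - a - v) + pi by ring.
  by rewrite !cosDpi mulrNN.
Qed.

Lemma psi3_shift (p : R * R * R) : psi3 (torus_shift p) = - psi3 p.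
Proof.
rewrite /psi3 /torus_shift /= !psi0E /psi_trig mkAN cosN sinN.
have -> : p.1.1 + pi / 2 + (p.2 + pi / 2) = (p.1.1 + p.2) + pi by field.
have -> : p.2 + pi / 2 - (p.1.1 + pi / 2) = p.2 - p.1.1 by field.
by rewrite cosDpi sinDpi; congr mkA; ring.
Qed.

Lemma sheet_shift (u v : R) (p : R * R * R) : sheet u v (torus_shift p) = - sheet u v p.
Proof.
rewrite /sheet /torus_shift /=.
have -> : p.1.1 + pi / 2 + (p.2 + pi / 2) - u = (p.1.1 + p.2 - u) + pi by field.
have -> : p.2 + pi / 2 - (p.1.1 + pi / 2) - v = p.2 - p.1.1 - v by field.
by rewrite cosDpi mulNr.
Qed.

Lemma reg3_shift (p : R * R * R) :
  sin (2 * (torus_shift p).1.2) != 0 <-> sin (2 * p.1.2) != 0.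
Proof. by rewrite /= mulrN sinN oppr_eq0. Qed.

Lemma shift3K (x : T3) : shift3 (shift3 x) = x.
Proof.
rewrite -[x in shift3 (shift3 x)]torus_reprK !shift3_torus_pi -[RHS]torus_reprK.
by apply: torus_pi_eq; apply/modpiP; [exists 1|exists 0|exists 1];
  rewrite /= ?mulr1z ?mulr0z; field.
Qed.

Lemma Psi_fiber (x y : T3) : reg3 x -> reg3 y -> Psi y = Psi x ->
  y = x \/ y = shift3 x.
Proof.
move=> rx ry /piA_eq yx.
have [b E] : exists b : bool, psi3 (torus_repr y) = (-1) ^+ b *: psi3 (torus_repr x).
  rewrite /psi3 /=; case: yx => ->; first by exists false; rewrite scale1r.
  by exists true; rewrite scaleN1r.
have [[? ? ?]|[? ? ?]] := psi0_fiber rx ry E.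
- by left; rewrite -[LHS]torus_reprK -[RHS]torus_reprK; apply: torus_pi_eq.
- right; rewrite -[LHS]torus_reprK -[in RHS](torus_reprK x) shift3_torus_pi.
  exact: torus_pi_eq.
Qed.

End Torus.

Lemma continuous_pair {T U V : topologicalType} (f : T -> U) (g : T -> V) (t : T) :
  {for t, continuous f} -> {for t, continuous g} ->
  {for t, continuous (fun z => (f z, g z))}.
Proof. by move=> cf cg; apply: cvg_pair. Qed.

Section ProductMaps.
Context {X X' Y Y' : topologicalType} (f : X -> X') (g : Y -> Y').

Definition prod_map (p : X * Y) : X' * Y' := (f p.1, g p.2).

Lemma continuous_prod_map : continuous f -> continuous g -> continuous prod_map.
Proof.
move=> cf cg p; apply: continuous_pair.
- exact: (continuous_comp (@cvg_fst _ _ _ _ _) (cf p.1)).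
- exact: (continuous_comp (@cvg_snd _ _ _ _ _) (cg p.2)).
Qed.

Lemma open_prod_map : (forall A, open A -> open (f @` A)) ->
  (forall B, open B -> open (g @` B)) -> forall O, open O -> open (prod_map @` O).
Proof.
move=> fo go O; rewrite !openE => oO _ [[a b] Oab <-].
have [[P Q] /= [Pa Qb] PQO] := oO _ Oab.
exists (f @` P°, g @` Q°) => /=.
  split; apply: open_nbhs_nbhs; split; [exact/fo/open_interior| |exact/go/open_interior|].
  - by exists a => //; exact: nbhs_interior.
  - by exists b => //; exact: nbhs_interior.
move=> [x y] [/= [a' Pa' <-] [b' Qb' <-]]; exists (a', b') => //.
by apply: PQO; split; exact: interior_subset.
Qed.

End ProductMaps.

Section TorusTopology.
Variable R : realType.
Local Notation pi := (trigo.pi : R).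
Local Notation T3 := (Torus3 R).
Local Notation RQ := (Rmodpi R).

Lemma open_piR (U : set R) : open U -> open (\pi_RQ @` U).
Proof.
move=> oU; change (open (\pi_RQ @^-1` (\pi_RQ @` U))).
have -> : \pi_RQ @^-1` (\pi_RQ @` U) =
    \bigcup_(k in [set: int]) ((fun y => y + k%:~R * pi) @^-1` U).
  apply/seteqP; split => y /=.
  - by move=> [x Ux /piR_eq/modpiP[k xy]]; exists k => //=; rewrite -xy addrC subrK.
  - move=> [k _ /= Uy]; exists (y + k%:~R * pi) => //.
    by apply/piR_eq/modpiP; exists k; rewrite addrC addKr.
apply: bigcup_open => k _.
have /continuousP : continuous (fun y : R => y + k%:~R * pi).
  by move=> y; apply: cvgD; [exact: cvg_id|exact: cvg_cst].
exact.
Qed.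

Lemma torus_piE : @torus_pi R = prod_map (prod_map \pi_RQ \pi_RQ) \pi_RQ.
Proof. by []. Qed.

Lemma continuous_torus_pi : continuous (@torus_pi R).
Proof.
rewrite torus_piE; apply: continuous_prod_map; first apply: continuous_prod_map.
all: exact: pi_continuous.
Qed.

Lemma open_torus_pi (O : set (R * R * R)) : open O -> open (@torus_pi R @` O).
Proof.
rewrite torus_piE; apply: open_prod_map; first apply: open_prod_map.
all: exact: open_piR.
Qed.

Lemma open_torus (N : set T3) : open (@torus_pi R @^-1` N) -> open N.
Proof.
move=> /open_torus_pi; congr open; apply/seteqP; split => [_ [p Np <-] //|x Nx].
by exists (torus_repr x); rewrite /= torus_reprK.
Qed.

End TorusTopology.

Section PolarContinuity.
Context {T : topologicalType} {R : realType} (u : R) (f g : T -> R) (t : T).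
Hypotheses (cf : {for t, continuous f}) (cg : {for t, continuous g}).

Lemma continuous_rot_re : {for t, continuous (fun z => rot_re u (f z) (g z))}.
Proof. by apply: continuousD; apply: continuousM => //; exact: cvg_cst. Qed.

Lemma continuous_rot_im : {for t, continuous (fun z => rot_im u (f z) (g z))}.
Proof. by apply: continuousD; apply: continuousM => //; exact: cvg_cst. Qed.

Hypothesis re0 : rot_re u (f t) (g t) != 0.

Lemma continuous_polar_dev : {for t, continuous (fun z => polar_dev u (f z) (g z))}.
Proof.
apply: continuous_comp (@continuous_atan R _).
by apply: continuousM; [exact: continuous_rot_im|exact: continuousV continuous_rot_re].
Qed.

Lemma continuous_polar_angle : {for t, continuous (fun z => polar_angle u (f z) (g z))}.
Proof. by apply: continuousD; [exact: cvg_cst|exact: continuous_polar_dev]. Qed.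

Lemma continuous_polar_radius :
  {for t, continuous (fun z => polar_radius u (f z) (g z))}.
Proof.
apply: continuousM; first exact: continuous_rot_re.
apply: continuousV; first exact: cos_polar_dev_neq0.
exact: continuous_comp continuous_polar_dev (@continuous_cos R _).
Qed.

End PolarContinuity.

Section MapContinuity.
Variable R : realType.
Local Notation A2 := (A2 R).
Local Notation AQ := (A2pm R).
Local Notation co := (@co R).

Lemma continuous_coord1 : continuous (fun p : R * R * R => p.1.1).
Proof. by move=> p; exact: continuous_comp (@cvg_fst _ _ _ _ _) (@cvg_fst _ _ _ _ _). Qed.

Lemma continuous_coord2 : continuous (fun p : R * R * R => p.1.2).
Proof. by move=> p; exact: continuous_comp (@cvg_fst _ _ _ _ _) (@cvg_snd _ _ _ _ _). Qed.

Lemma continuous_coord3 : continuous (fun p : R * R * R => p.2).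
Proof. by move=> p; exact: cvg_snd. Qed.

Lemma continuous_mkA {T : topologicalType} (f g h k : T -> R) (t : T) :
  {for t, continuous f} -> {for t, continuous g} ->
  {for t, continuous h} -> {for t, continuous k} ->
  {for t, continuous (fun z => mkA (f z) (g z) (h z) (k z))}.
Proof.
move=> cf cg ch ck; rewrite (_ : (fun z => _) = (fun z =>
  f z *: aone R + g z *: e1 R + h z *: e2 R + k z *: e12 R)); last first.
  by apply/funext => z; rewrite mkAE.
by repeat apply: continuousD; apply: continuousZr_tmp.
Qed.

Lemma continuous_psi3 : continuous (@psi3 R).
Proof.
move=> p; rewrite (_ : @psi3 R = fun q => psi_trig q.1.2 (q.1.1 + q.2) (q.2 - q.1.1)).
  2: by apply/funext => q; rewrite /psi3 psi0E.
have c1 := @continuous_coord1 p; have c2 := @continuous_coord2 p.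
have c3 := @continuous_coord3 p.
have cS : {for p, continuous (fun q : R * R * R => q.1.1 + q.2)} by exact: continuousD.
have cD : {for p, continuous (fun q : R * R * R => q.2 - q.1.1)} by exact: continuousB.
have ccos (h : R * R * R -> R) :
    {for p, continuous h} -> {for p, continuous (fun q => cos (h q))}.
  by move=> ch; exact: continuous_comp ch (@continuous_cos R _).
have csin (h : R * R * R -> R) :
    {for p, continuous h} -> {for p, continuous (fun q => sin (h q))}.
  by move=> ch; exact: continuous_comp ch (@continuous_sin R _).
rewrite /psi_trig.
by apply: (@continuous_mkA _ (fun q => _) (fun q => _) (fun q => _) (fun q => _));
  apply: continuousM; auto.
Qed.

Lemma continuous_Psi : continuous (@Psi R).
Proof.
apply/continuousP => N oN; apply: open_torus.
rewrite (_ : _ @^-1` _ = @psi3 R @^-1` (\pi_AQ @^-1` N)).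
  by move/continuousP: continuous_psi3; apply.
by apply/seteqP; split => p /=; rewrite Psi_torus_pi.
Qed.

Lemma continuous_sheet (u v : R) : continuous (sheet u v).
Proof.
move=> p; have c1 := @continuous_coord1 p; have c3 := @continuous_coord3 p.
apply: continuousM; apply: continuous_comp (@continuous_cos R _);
  apply: continuousB => //; first exact: continuousD.
all: try exact: cvg_cst.
exact: continuousB.
Qed.

Lemma continuous_chart (u v : R) (a : A2) : chart_dom u v a -> {for a, continuous (chart u v)}.
Proof.
move=> [re1 re2].
have cc i : continuous (fun b : A2 => co b i).
  by move=> b; exact: coord_continuous.
have cs := continuous_polar_angle (cc 0 a) (cc 1 a) re1.
have cd := continuous_polar_angle (cc 3 a) (cc 2 a) re2.
have cr1 := continuous_polar_radius (cc 0 a) (cc 1 a) re1.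
have cr2 := continuous_polar_radius (cc 3 a) (cc 2 a) re2.
have c2 : {for a, continuous (fun _ : A2 => (2 : R)^-1)} by exact: cst_continuous.
apply: continuous_pair; first apply: continuous_pair.
- exact: continuousM (continuousB cs cd) c2.
- apply: continuous_comp (@continuous_atan R _); apply: continuousM => //.
  by apply: continuousV => //; exact: polar_radius_neq0.
- exact: continuousM (continuousD cs cd) c2.
Qed.

Lemma continuous_torus_shift : continuous (@torus_shift R).
Proof.
move=> p; apply: (@continuous_pair _ _ _ (fun q => (_, _)) (fun q => _));
  first apply: continuous_pair.
- by apply: continuousD; [exact: continuous_coord1|exact: cvg_cst].
- exact: continuousN (@continuous_coord2 p).
- by apply: continuousD; [exact: continuous_coord3|exact: cvg_cst].
Qed.

Lemma continuous_repr_even {Y : topologicalType} (V : set A2) (G : A2 -> Y) :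
  open V -> (forall a, V a -> V (- a)) -> (forall a, G (- a) = G a) ->
  {in V, continuous G} -> {in \pi_AQ @` V, continuous (fun z : AQ => G (repr z))}.
Proof.
move=> oV VN GN cG z; rewrite inE => -[a Va <-].
have GreprE b : G (repr (\pi_AQ b)) = G b by case: (repr_piA b) => ->.
move=> N; rewrite /= GreprE nbhsE => -[N0 [oN0 N0Ga] N0N].
have oVG : open (V `&` G @^-1` N0) by move/continuous_inP: cG; apply.
have piVG : \pi_AQ @^-1` (\pi_AQ @` (V `&` G @^-1` N0)) = V `&` G @^-1` N0.
  apply/seteqP; split => [b [c [Vc N0c] /piA_eq[<-//|cb]]|b ?]; last by exists b.
  by rewrite -(opprK b) -cb; split; [exact: VN|rewrite /= GN].
apply: (@filterS _ _ _ (\pi_AQ @` (V `&` G @^-1` N0))).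
  by move=> _ [c [_ N0c] <-]; apply: N0N; rewrite /= GreprE.
apply: open_nbhs_nbhs; split; last by exists a.
by change (open (\pi_AQ @^-1` (\pi_AQ @` (V `&` G @^-1` N0)))); rewrite piVG.
Qed.

End MapContinuity.

Section Image.
Variable R : realType.
Local Notation pi := (trigo.pi : R).
Local Notation A2 := (A2 R).
Local Notation AQ := (A2pm R).
Local Notation co := (@co R).

Lemma Uset_opp (a : A2) : Uset a -> Uset (- a).
Proof.
have negE (x : R) : - x = 0 -> x = 0 by move/eqP; rewrite oppr_eq0 => /eqP.
rewrite /Uset /in_A1 /in_A1e2 /= !coN => -[na [nA1e2 nA1]]; split; [|split].
- by rewrite -na /anorm; congr Num.sqrt; apply: eq_bigr => i _; rewrite mxE sqrrN.
- by move=> [/negE ? /negE ?]; apply: nA1e2.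
- by move=> [/negE ? /negE ?]; apply: nA1.
Qed.

Lemma Uset_psi3 (p : R * R * R) : sin (2 * p.1.2) != 0 -> Uset (psi3 p).
Proof.
move=> /sin2_neq0[c0 s0]; rewrite /Uset /in_A1 /in_A1e2 /psi3 psi0E /psi_trig /=.
have [-> -> -> ->] := co_mkA (cos p.1.2 * cos (p.1.1 + p.2)) (cos p.1.2 * sin (p.1.1 + p.2))
  (sin p.1.2 * sin (p.2 - p.1.1)) (sin p.1.2 * cos (p.2 - p.1.1)).
have circle (x : R) : ~ (cos x = 0 /\ sin x = 0).
  by move=> [c s]; have := cos2Dsin2 x; rewrite c s expr0n addr0 => /eqP; rewrite eq_sym oner_eq0.
have mulI (c y : R) : c != 0 -> c * y = 0 -> y = 0.
  by move=> c_neq0 /eqP; rewrite mulf_eq0 (negbTE c_neq0) => /eqP.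
split; [|split]; last 2 first.
- by move=> [/(mulI _ _ c0) ? /(mulI _ _ c0) ?]; apply: (circle (p.1.1 + p.2)).
- by move=> [/(mulI _ _ s0) ? /(mulI _ _ s0) ?]; apply: (circle (p.2 - p.1.1)).
rewrite anorm_mkA !exprMn -!mulrDr -addrA -mulrDr [sin _ ^+ 2 + _]addrC !cos2Dsin2.
by rewrite !mulr1 cos2Dsin2 sqrtr1.
Qed.

Lemma chart_dom_exists (a : A2) : Uset a -> exists u v : R, chart_dom u v a.
Proof.
move=> [_ [nA1e2 nA1]].
have rot_pihalf x y : rot_re (pi / 2) x y = y.
  by rewrite /rot_re cos_pihalf sin_pihalf mul0r add0r mul1r.
have rot0 x y : rot_re 0 x y = x by rewrite /rot_re cos0 sin0 mul0r addr0 mul1r.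
have [u re1] : exists u, rot_re u (co a 0) (co a 1) != 0.
  have [a0|a0] := eqVneq (co a 0) 0; last by exists 0; rewrite rot0.
  by exists (pi / 2); rewrite rot_pihalf; apply/eqP => a1; apply: nA1e2.
have [v re2] : exists v, rot_re v (co a 3) (co a 2) != 0.
  have [a3|a3] := eqVneq (co a 3) 0; last by exists 0; rewrite rot0.
  by exists (pi / 2); rewrite rot_pihalf; apply/eqP => a2; apply: nA1.
by exists u, v.
Qed.

Lemma Psi_chart (u v : R) (a : A2) : Uset a -> chart_dom u v a ->
  reg3 (torus_pi (chart u v a)) /\ Psi (torus_pi (chart u v a)) = \pi_AQ a.
Proof.
move=> [a1 _] dom; have [reg [b E]] := psi3_chart a1 dom.
by rewrite reg3_torus_pi Psi_torus_pi E piA_signr.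
Qed.

Lemma image_Psi : @Psi R @` @reg3 R = @Uquot R.
Proof.
apply/seteqP; split => [_ [x rx <-]|_ [a Ua <-]].
  by exists (psi3 (torus_repr x)) => //; exact: Uset_psi3.
have [u [v dom]] := chart_dom_exists Ua.
by have [reg E] := Psi_chart Ua dom; exists (torus_pi (chart u v a)).
Qed.

End Image.

Section Sheets.
Variables (R : realType) (u v : R).
Local Notation A2 := (A2 R).
Local Notation AQ := (A2pm R).
Local Notation T3 := (Torus3 R).
Local Notation co := (@co R).

Definition shift_if (s : bool) (p : R * R * R) := if s then torus_shift p else p.

Definition base_nbhs : set AQ := \pi_AQ @` chart_dom u v.

Definition sheet_set (s : bool) : set T3 :=
  [set x | 0 < (-1) ^+ s * sheet u v (torus_repr x)].

Definition sheet_section (s : bool) (z : AQ) : T3 :=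
  torus_pi (shift_if s (chart u v (repr z))).

Lemma open_chart_dom : open (chart_dom u v).
Proof.
have cre w i j : continuous (fun a : A2 => rot_re w (co a i) (co a j)).
  by move=> a; apply: (@continuous_rot_re _ _ w (fun b => co b i) (fun b => co b j));
    exact: coord_continuous.
rewrite (_ : chart_dom u v =
    (fun a => rot_re u (co a 0) (co a 1)) @^-1` [set x | x != 0] `&`
    (fun a => rot_re v (co a 3) (co a 2)) @^-1` [set x | x != 0]) //.
by apply: openI; [move/continuousP: (cre u 0 1)|move/continuousP: (cre v 3 2)];
  apply; exact: open_neq.
Qed.

Lemma base_nbhs_pi (a : A2) : base_nbhs (\pi_AQ a) <-> chart_dom u v a.
Proof.
split=> [[b dom /piA_eq[<-//|bE]]|]; last by exists a.
by rewrite -[a]opprK -bE; exact: chart_domN.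
Qed.

Lemma open_base_nbhs : open base_nbhs.
Proof.
change (open (\pi_AQ @^-1` base_nbhs)).
rewrite (_ : _ @^-1` _ = chart_dom u v); first exact: open_chart_dom.
by apply/seteqP; split=> a /base_nbhs_pi.
Qed.

Lemma base_nbhs_Psi (x : T3) : reg3 x ->
  base_nbhs (Psi x) <-> sheet u v (torus_repr x) != 0.
Proof.
move=> rx; rewrite -(@chart_dom_psi3 R u v (torus_repr x) rx) -base_nbhs_pi.
by rewrite -[x in Psi x]torus_reprK Psi_torus_pi.
Qed.

Lemma sheet_set_torus_pi (s : bool) (p : R * R * R) :
  sheet_set s (torus_pi p) <-> 0 < (-1) ^+ s * sheet u v p.
Proof. by rewrite /sheet_set /= sheet_torus_pi. Qed.

Lemma sheet_setE (s : bool) (x : T3) : sheet_set s x <->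
  if s then sheet u v (torus_repr x) < 0 else 0 < sheet u v (torus_repr x).
Proof. by case: s; rewrite /sheet_set /= ?expr1 ?expr0 ?mulN1r ?mul1r ?oppr_gt0. Qed.

Lemma open_sheet_set (s : bool) : open (sheet_set s).
Proof.
apply: open_torus; rewrite (_ : _ @^-1` _ = [set p | 0 < (-1) ^+ s * sheet u v p]).
  have /continuousP cs : continuous (fun p : R * R * R => (-1) ^+ s * sheet u v p).
    move=> p; apply: (@continuousM _ _ (fun=> _) (sheet u v)); first exact: cvg_cst.
    exact: continuous_sheet.
  exact: cs _ (@open_gt R 0).
by apply/seteqP; split=> p /sheet_set_torus_pi.
Qed.

Lemma sheet_shift_if (s : bool) (p : R * R * R) :
  sheet u v (shift_if s p) = (-1) ^+ s * sheet u v p.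
Proof. by case: s; rewrite /= ?sheet_shift ?mulN1r ?mul1r. Qed.

Lemma Psi_shift_if (s : bool) (p : R * R * R) :
  Psi (torus_pi (shift_if s p)) = Psi (torus_pi p).
Proof. by case: s => //=; rewrite !Psi_torus_pi psi3_shift piA_opp. Qed.

Lemma reg3_shift_if (s : bool) (p : R * R * R) :
  reg3 (torus_pi (shift_if s p)) <-> reg3 (torus_pi p).
Proof. by rewrite !reg3_torus_pi; case: s => //; exact: reg3_shift. Qed.

Lemma sheet_shift3 (x : T3) : sheet u v (torus_repr (shift3 x)) = - sheet u v (torus_repr x).
Proof. by rewrite -{1}(torus_reprK x) shift3_torus_pi sheet_torus_pi sheet_shift. Qed.

Lemma repr_Uquot (z : AQ) : Uquot z -> Uset (repr z).
Proof. by move=> [a Ua <-]; case: (repr_piA a) => ->; last exact: Uset_opp. Qed.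

Lemma sheet_section_spec (s : bool) (z : AQ) : (base_nbhs `&` @Uquot R) z ->
  (sheet_set s `&` @reg3 R) (sheet_section s z) /\ Psi (sheet_section s z) = z.
Proof.
move=> [bz /repr_Uquot Ua]; rewrite -[z in base_nbhs z]reprK base_nbhs_pi in bz.
have [reg E] := Psi_chart Ua bz.
rewrite /sheet_section Psi_shift_if E reprK; split => //.
split; last exact/reg3_shift_if.
by rewrite sheet_set_torus_pi sheet_shift_if mulrA -expr2 sqrr_sign mul1r sheet_chart.
Qed.

Lemma sheet_section_Psi (s : bool) (x : T3) :
  (sheet_set s `&` @reg3 R) x -> sheet_section s (Psi x) = x.
Proof.
move=> [sx rx]; set a := psi3 (torus_repr x).
have chartE : chart u v (repr (Psi x)) = chart u v a.
  by case: (repr_piA a) => E; rewrite /Psi [repr _]E ?chartN.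
have dom : chart_dom u v a.
  apply/(@chart_dom_psi3 R u v (torus_repr x) rx).
  by apply: contraTneq sx => ->; rewrite /sheet_set /= mulr0 ltxx.
have [ry Py] := Psi_chart (@Uset_psi3 R (torus_repr x) rx) dom.
set y := torus_pi (chart u v a) in ry Py.
have sy : 0 < sheet u v (torus_repr y) by rewrite sheet_torus_pi sheet_chart.
have Pyx : Psi y = Psi x := Py.
rewrite /sheet_section chartE; move/sheet_setE: sx.
case: (Psi_fiber rx ry Pyx) => yx; case: s => sx /=.
- by move: sx; rewrite -yx => /(lt_trans sy); rewrite ltxx.
- exact: yx.
- by rewrite -shift3_torus_pi -/y yx shift3K.
- by move: sy; rewrite yx sheet_shift3 oppr_gt0 => /(lt_trans sx); rewrite ltxx.
Qed.

Lemma continuous_sheet_section (s : bool) :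
  {within base_nbhs `&` @Uquot R, continuous (sheet_section s)}.
Proof.
apply: continuous_in_subspaceT => z; rewrite inE => -[bz _].
apply: (@continuous_repr_even _ _ (chart_dom u v)
  (fun a => torus_pi (shift_if s (chart u v a)))) => [||a|a|]; rewrite ?inE //.
- exact: open_chart_dom.
- exact: chart_domN.
- by rewrite chartN.
- move=> dom; change {for a, continuous (@torus_pi R \o (shift_if s \o chart u v))}.
  apply: continuous_comp; last exact: continuous_torus_pi.
  apply: continuous_comp; first exact: continuous_chart.
  by case: s; [exact: continuous_torus_shift|exact: cvg_id].
Qed.

Lemma image_sheet_set (s : bool) :
  @Psi R @` (sheet_set s `&` @reg3 R) = base_nbhs `&` @Uquot R.
Proof.
apply/seteqP; split => [_ [x [sx rx] <-]|z bz]; last first.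
  by have [? ?] := sheet_section_spec s bz; exists (sheet_section s z).
split; last by rewrite -image_Psi; exists x.
by apply/(base_nbhs_Psi rx); apply: contraTneq sx => ->; rewrite /sheet_set /= mulr0 ltxx.
Qed.

Lemma sheet_set_homeomorphism (s : bool) (W : set T3) :
  W = sheet_set s `&` @reg3 R ->
  [/\ @Psi R @` W = base_nbhs `&` @Uquot R, {within W, continuous (@Psi R)} &
   exists g : AQ -> T3,
     [/\ forall z, (base_nbhs `&` @Uquot R) z -> W (g z) /\ Psi (g z) = z,
         forall x, W x -> g (Psi x) = x &
         {within base_nbhs `&` @Uquot R, continuous g}]].
Proof.
move=> ->; split; first exact: image_sheet_set.
  exact/continuous_subspaceT/continuous_Psi.
exists (sheet_section s); split.
- exact: sheet_section_spec.
- exact: sheet_section_Psi.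
- exact: continuous_sheet_section.
Qed.

End Sheets.

Lemma Psi_fiber_set (R : realType) (x : Torus3 R) : reg3 x ->
  [set y | reg3 y /\ Psi y = Psi x] = [set x; shift3 x].
Proof.
move=> rx; apply/seteqP; split => [y [ry /(Psi_fiber rx ry) []] ->|y]; [by left|by right|].
case=> ->; first by [].
have -> : shift3 x = torus_pi (torus_shift (torus_repr x)).
  by rewrite -shift3_torus_pi torus_reprK.
by split; [rewrite reg3_torus_pi reg3_shift|rewrite Psi_torus_pi psi3_shift piA_opp].
Qed.

Lemma Psi_two_fold_covering (R : realType) :
  two_fold_covering (@Psi R) (@reg3 R) (@Uquot R).
Proof.
split; [exact: image_Psi|exact/continuous_subspaceT/continuous_Psi|].
move=> _ [a Ua <-]; have [u [v dom]] := chart_dom_exists Ua.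
exists (base_nbhs u v); split; [exact: open_base_nbhs|exact/base_nbhs_pi|].
exists (sheet_set u v false), (sheet_set u v true); split.
- exact: open_sheet_set.
- exact: open_sheet_set.
- apply/seteqP; split => x /=.
    move=> [rx /(base_nbhs_Psi u v rx)]; rewrite neq_lt => /orP[neg|pos].
      by right; split; rewrite // sheet_setE.
    by left; split; rewrite // sheet_setE.
  move=> [[/sheet_setE sx rx]|[/sheet_setE sx rx]]; split => //.
    by apply/(base_nbhs_Psi u v rx); exact: lt0r_neq0.
  by apply/(base_nbhs_Psi u v rx); exact: ltr0_neq0.
- apply/seteqP; split => x // [[/sheet_setE pos /sheet_setE neg] _].
  by move: (lt_trans neg pos); rewrite ltxx.
- by move=> W [] /sheet_set_homeomorphism.
Qed.

Theorem proposition4p7 (R : realType) :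
  two_fold_covering (@Psi R) (@reg3 R) (@Uquot R) /\
  (forall x : Torus3 R, reg3 x ->
     [set y | reg3 y /\ Psi y = Psi x] = [set x; shift3 x]).
Proof. by split; [exact: Psi_two_fold_covering|exact: Psi_fiber_set]. Qed.
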